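(* Let $\mathbf{X}\in\mathbb{R}^{n\times d}$ have rows $\mathbf{X}_1,\ldots,\mathbf{X}_n$ and columns $\mathbf{X}_{\cdot 1},\ldots,\mathbf{X}_{\cdot d}$, let $u$ be a utility function, $H(\mathbf{z})=-\frac1n\sum_{j=1}^n u(z_j)$ for $\mathbf{z}\in\mathbb{R}^n$, $h(\mathbf{w})=H(\mathbf{X}\mathbf{w})$, assume $h$ is proper convex with Lipschitz continuous gradient, and let $\lambda>0$. The primal problem $\min_{\mathbf{w}\in\mathbb{R}^d_+}h(\mathbf{w})+\lambda\|\mathbf{w}\|_1$ and its Fenchel–Rockafellar dual are $$\mathbf{w}^*\in\arg\min_{\mathbf{w}\in\mathcal{C}_P}\mathcal{P}_\lambda(\mathbf{w}):=-\frac1n\sum_{j=1}^n u(\mathbf{w}^{\top}\mathbf{X}_j)+\lambda\|\mathbf{w}\|_1,\qquad \boldsymbol{\theta}^*\in\arg\max_{\boldsymbol{\theta}\in\mathcal{C}_D}\mathcal{D}_\lambda(\boldsymbol{\theta}):=\frac1n\sum_{j=1}^n u^*(n\lambda\theta_j),$$ where $\mathcal{C}_P=\mathrm{dom}(\mathcal{P}_\lambda)\cap\mathbb{R}^d_+$ and $\mathcal{C}_D=\mathrm{dom}(\mathcal{D}_\lambda)\cap\{\boldsymbol{\theta}\in\mathbb{R}^n:\|\phi(\mathbf{X}^{\top}\boldsymbol{\theta})\|_\infty\leq1\}$. Moreover, for such an optimal primal-dual pair $(\mathbf{w}^*,\boldsymbol{\theta}^* )\in\mathcal{C}_P\times\mathcal{C}_D$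 the optimality conditions read: $-\lambda\boldsymbol{\theta}^*=\nabla_{\mathbf{z}}H(\mathbf{X}\mathbf{w}^* )$, and for each $j\in[d]$: if $w_j^*=0$ then $\phi(\mathbf{X}_{\cdot j}^{\top}\boldsymbol{\theta}^* )\leq1$; if $w_j^*\neq0$ then $\phi(\mathbf{X}_{\cdot j}^{\top}\boldsymbol{\theta}^* )=1$ and $\boldsymbol{\theta}^{*\top}\mathbf{X}_{\cdot j}w_j^*=|w_j^*|$.
   Context: A utility function is an increasing concave function $u$. $u^*$ denotes the conjugate of $u$ appearing in the duality, namely $u^*(\theta)=\inf_z\{\theta z-u(z)\}$ (so that $H^*(-\lambda\boldsymbol{\theta})=-\frac1n\sum_j u^*(n\lambda\theta_j)$ where $H^*$ is the convex conjugate of $H$). $\phi(x)=\max\{x,0\}$ applied entrywise, and inequalities between vectors are entrywise. $\mathrm{dom}$ denotes the effective domain (where the function is finite). *)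

From HB Require Import structures.
From mathcomp Require Import all_boot all_order all_algebra.
From mathcomp Require Import all_classical all_reals all_analysis.
Set Implicit Arguments. Unset Strict Implicit. Unset Printing Implicit Defensive.
Import Order.TTheory GRing.Theory Num.Theory.
Import numFieldNormedType.Exports.
Local Open Scope classical_set_scope.
Local Open Scope ring_scope.

Section Defs.
Variable R : realType.

Definition concave_fun (u : R -> R) : Prop :=
  forall a x y : R, 0 <= a <= 1 -> a * u x + (1 - a) * u y <= u (a * x + (1 - a) * y).

Definition utility (u : R -> R) : Prop :=
  {homo u : x y / x < y} /\ concave_fun u.

Definition convex_fun (d : nat) (f : 'cV[R]_d -> R) : Prop :=
  forall (a : R) (x y : 'cV[R]_d), 0 <= a <= 1 ->
    f (a *: x + (1 - a) *: y) <= a * f x + (1 - a) * f y.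

Definition phi (x : R) : R := Num.max x 0.

Definition norminf (m : nat) (v : 'cV[R]_m) : R := \big[Num.max/0]_(k < m) `|v k ord0|.

Definition Hfun (n : nat) (u : R -> R) (z : 'cV[R]_n) : R :=
  - (n%:R)^-1 * \sum_(j < n) u (z j ord0).

Definition hfun (n d : nat) (u : R -> R) (X : 'M[R]_(n, d)) (w : 'cV[R]_d) : R :=
  Hfun u (X *m w).

Definition uconj (u : R -> R) (t : R) : \bar R :=
  ereal_inf [set ((t * z - u z)%:E) | z in [set: R]].

Definition Pobj (n d : nat) (u : R -> R) (lam : R) (X : 'M[R]_(n, d))
  (w : 'cV[R]_d) : \bar R :=
  (- (n%:R)^-1 * \sum_(j < n) u (\sum_(k < d) w k ord0 * X j k)
   + lam * \sum_(k < d) `|w k ord0|)%:E.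

Definition Dobj (n : nat) (u : R -> R) (lam : R) (th : 'cV[R]_n) : \bar R :=
  ((n%:R)^-1)%:E * (\sum_(j < n) uconj u (n%:R * lam * th j ord0))%E.

Definition domP (n d : nat) u lam (X : 'M[R]_(n, d)) : set 'cV[R]_d :=
  [set w | (Pobj u lam X w < +oo)%E].
Definition domD (n : nat) u lam : set 'cV[R]_n :=
  [set th | (-oo < Dobj u lam th)%E].

Definition CP (n d : nat) u lam (X : 'M[R]_(n, d)) : set 'cV[R]_d :=
  domP u lam X `&` [set w | forall k : 'I_d, 0 <= w k ord0].
Definition CD (n d : nat) u lam (X : 'M[R]_(n, d)) : set 'cV[R]_n :=
  domD u lam `&` [set th | norminf (map_mx phi (X^T *m th)) <= 1].

Definition fconj (m : nat) (F : 'cV[R]_m -> \bar R) (v : 'cV[R]_m) : \bar R :=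
  ereal_sup [set ((\sum_(i < m) v i ord0 * x i ord0)%:E - F x)%E | x in [set: 'cV[R]_m]].

Definition fpen (d : nat) (lam : R) (w : 'cV[R]_d) : \bar R :=
  if [forall k : 'I_d, 0 <= w k ord0] then (lam * \sum_(k < d) `|w k ord0|)%:E else +oo%E.

(* Fenchel--Rockafellar dual objective of  min_w f(w) + H(Xw),
   max_y -f^*(-X^T y) - H^*(y), written in the variable theta with y = -lambda theta *)
Definition FRdual (n d : nat) (u : R -> R) (lam : R) (X : 'M[R]_(n, d))
  (th : 'cV[R]_n) : \bar R :=
  (- fconj (fpen lam) (lam *: (X^T *m th))
   - fconj (fun z : 'cV[R]_n => (Hfun u z)%:E) (- lam *: th))%E.

End Defs.
Arguments phi {R}.

From HB Require Import structures.
From mathcomp Require Import all_boot all_order all_algebra.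
From mathcomp Require Import all_classical all_reals all_analysis.
From mathcomp Require Import ring lra.
Import Order.TTheory GRing.Theory Num.Theory.
Import numFieldNormedType.Exports.
Set Implicit Arguments. Unset Strict Implicit. Unset Printing Implicit Defensive.
Local Open Scope classical_set_scope.
Local Open Scope ring_scope.

(* Dual: the conjugate of lam ||w||_1 restricted to w >= 0 is the indicator of
   {v <= lam}, and the conjugate of the separable function H is the sum of the
   one-dimensional conjugates u^*, which gives -f^*(lam X^T th) - H^*(-lam th)
   = D_lambda(th) on C_D and -oo outside.

   Optimality: let z := X w*. Moving w* along a coordinate direction and along
   w* itself (first-order conditions on the orthant) shows that
   th^ := u'(z) / (n lam) lies in C_D and, since u^*(u'(z)) = u'(z) z - u(z)
   for concave u, that D_lambda(th^) = P_lambda(w* ). Hence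
   D_lambda(th* ) >= P_lambda(w* ). But P_lambda(w* ) - D_lambda(th* ) is a sum
   of nonnegative terms: the Fenchel-Young gaps
   n lam th*_j z_j - u(z_j) - u^*(n lam th*_j) and the slacks
   w*_k (1 - X_k^T th* ). All of them vanish: the first makes n lam th*_j a
   supergradient of u at z_j, i.e. u'(z_j), so that -lam th* = grad H(z);
   the second is complementary slackness. *)

Section OneSidedSlopes.
Variable R : realFieldType.
Implicit Types (f : R -> R) (a b c : R).

Lemma derive1_le_of_majorant_right f a b c : a < b -> derivable f a 1 ->
  (forall t, a < t < b -> f t <= f a + c * (t - a)) -> 'D_1 f a <= c.
Proof.
move=> ab df fmaj; rewrite ['D_1 f a]cvg_at_rightE //.
apply: limr_le.
  rewrite -(cvg_at_rightE (fun h : R => h^-1 *: ((f \o shift a) _ - f a))) //.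
  apply: cvg_trans df; apply: cvg_app => A [e e0 Ae].
  by exists e => // x xe x0; apply: Ae => //; exact/lt0r_neq0.
near=> h.
have h0 : 0 < h by near: h; exists 1 => /=.
have hb : h + a < b.
  near: h; exists (b - a); first by rewrite /= subr_gt0.
  by move=> h /=; rewrite sub0r normrN => /(le_lt_trans (ler_norm _)); rewrite ltrBrDr.
rewrite /= /shift [h%:A]mulr1 ler_pdivrMl // lerBlDl mulrC.
by have := fmaj (h + a); rewrite ltrDr h0 hb addrK; apply.
Unshelve. all: by end_near. Qed.

Lemma derive1_ge_of_majorant_left f a b c : b < a -> derivable f a 1 ->
  (forall t, b < t < a -> f t <= f a + c * (t - a)) -> c <= 'D_1 f a.
Proof.
move=> ba df fmaj; rewrite ['D_1 f a]cvg_at_leftE //.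
apply: limr_ge.
  rewrite -(cvg_at_leftE (fun h : R => h^-1 *: ((f \o shift a) _ - f a))) //.
  apply: cvg_trans df; apply: cvg_app => A [e e0 Ae].
  by exists e => // x xe x0; apply: Ae => //; exact/ltr0_neq0.
near=> h.
have h0 : h < 0 by near: h; exists 1 => /=.
have hb : b < h + a.
  near: h; exists (a - b); first by rewrite /= subr_gt0.
  by move=> h /=; rewrite sub0r normrN => /ltr_normlP[hb _] _; lra.
rewrite /= /shift [h%:A]mulr1 ler_ndivlMl // lerBlDl mulrC.
by have := fmaj (h + a); rewrite gtrDr h0 hb addrK; apply.
Unshelve. all: by end_near. Qed.

Lemma derive1_ge_of_minorant_right f a b c : a < b -> derivable f a 1 ->
  (forall t, a < t < b -> f a + c * (t - a) <= f t) -> c <= 'D_1 f a.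
Proof.
move=> ab df fmin; rewrite -lerN2 -deriveN //.
apply: derive1_le_of_majorant_right ab (derivableN df) _ => t /fmin /=.
by rewrite mulNr -opprD lerN2.
Qed.

End OneSidedSlopes.

Section Supergradients.
Variable R : realType.
Implicit Types (u : R -> R) (a b s y : R).

Lemma is_derive0_comp_affine u a b :
  derivable u a 1 -> is_derive (0 : R) 1 (fun t => u (t * b + a)) (b * 'D_1 u a).
Proof.
move=> /derivable1_diffP du.
have quotE : (fun h : R => h^-1 *: (u ((h *: 1 + 0) * b + a) - u (0 * b + a))) =
             (fun h : R => h^-1 *: (u (h *: b + a) - u a)).
  by apply/funext => h; rewrite addr0 mul0r add0r [_ *: 1]mulr1.
apply: DeriveDef.
  by rewrite /derivable /= quotE; exact: diff_derivable.
rewrite [LHS]/derive /= quotE -/(derive u a b) !deriveE //.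
by rewrite -[in LHS](mulr1 b) -[b * 1]/(b *: 1) linearZ.
Qed.

Lemma concave_tangent u a y : concave_fun u -> derivable u a 1 ->
  u y <= u a + 'D_1 u a * (y - a).
Proof.
move=> ucvx du; have [dg Dg] := is_derive0_comp_affine (y - a) du.
suff : u y - u a <= (y - a) * 'D_1 u a by rewrite mulrC; lra.
rewrite -Dg; apply: (derive1_ge_of_minorant_right ltr01 dg) => t /andP[t0 t1].
have := ucvx t y a; rewrite (ltW t0) (ltW t1) => /(_ isT).
rewrite mul0r add0r subr0; have -> : t * y + (1 - t) * a = t * (y - a) + a by ring.
lra.
Qed.

Lemma derive1_of_supergradient u a s : derivable u a 1 ->
  (forall y, u y <= u a + s * (y - a)) -> 'D_1 u a = s.
Proof.
move=> du sup; have [dg Dg] := is_derive0_comp_affine 1 du; rewrite mul1r in Dg.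
have shifted t : u (t * 1 + a) <= u (0 * 1 + a) + s * (t - 0).
  by rewrite mul0r add0r mulr1 subr0; have := sup (t + a); rewrite addrK.
apply/eqP; rewrite eq_le -Dg.
rewrite (derive1_le_of_majorant_right ltr01 dg) => [|t _]; last exact: shifted.
by apply: (derive1_ge_of_majorant_left (ltrN10 _) dg) => t _; exact: shifted.
Qed.

End Supergradients.

Section ConcaveConjugate.
Variable R : realType.
Implicit Types (u : R -> R) (a s z : R).

Lemma uconj_le u s z : (uconj u s <= (s * z - u z)%:E)%E.
Proof. by apply: ereal_inf_lbound; exists z. Qed.

Lemma uconj_lty u s : (uconj u s < +oo)%E.
Proof. exact: le_lt_trans (uconj_le u s 0) (ltry _). Qed.

Lemma uconj_derive u a : concave_fun u -> derivable u a 1 ->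
  uconj u ('D_1 u a) = ('D_1 u a * a - u a)%:E.
Proof.
move=> ucvx du; apply/eqP; rewrite eq_le uconj_le /=.
apply/ereal_infP => _ [z _ <-]; rewrite lee_fin.
by have := concave_tangent z ucvx du; lra.
Qed.

Lemma derive1_of_uconj_attained u s z : derivable u z 1 ->
  uconj u s = (s * z - u z)%:E -> 'D_1 u z = s.
Proof.
move=> du attained; apply: derive1_of_supergradient du _ => y.
by have := uconj_le u s y; rewrite attained lee_fin; lra.
Qed.

Lemma oppe_uconj u s :
  (- uconj u s = ereal_sup [set (u y - s * y)%:E | y in [set: R]])%E.
Proof.
rewrite /uconj ereal_infEN oppeK; congr ereal_sup; apply/seteqP; split.
  by move=> _ /= [_ [z _ <-] <-]; exists z => //; rewrite -EFinN opprB.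
by move=> _ /= [z _ <-]; exists (s * z - u z)%:E; [exists z | rewrite -EFinN opprB].
Qed.

End ConcaveConjugate.

Section FenchelDual.
Variable R : realType.

Lemma phi_le1 (x : R) : (phi x <= 1) = (x <= 1).
Proof. by rewrite /phi ge_max ler01 andbT. Qed.

Lemma norminf_phi_le1 m (A : 'cV[R]_m) :
  (norminf (map_mx phi A) <= 1) = [forall k, A k ord0 <= 1].
Proof.
have phi_norm (x : R) : `|phi x| = phi x by rewrite ger0_norm // le_max lexx orbT.
apply/bigmax_leP/forallP => [[_ A1] k|A1].
  by have := A1 k isT; rewrite mxE phi_norm phi_le1.
by split => // k _; rewrite mxE phi_norm phi_le1.
Qed.

Lemma sum_delta_mx_mul m (k : 'I_m) (F : 'I_m -> R) :
  \sum_(i < m) (delta_mx k ord0 : 'cV[R]_m) i ord0 * F i = F k.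
Proof.
rewrite (bigD1 k) //= big1 => [|i /negPf ik]; first by rewrite mxE !eqxx mul1r addr0.
by rewrite mxE ik mul0r.
Qed.

Lemma sum_ereal_sup_le (T : pointedType) n (g : 'I_n -> T -> R) (M : \bar R) :
  (forall f : 'I_n -> T, ((\sum_i g i (f i))%:E <= M)%E) ->
  (\sum_(i < n) ereal_sup [set (g i y)%:E | y in [set: T]] <= M)%E.
Proof.
elim: n g M => [|n IH] g M gM.
  by rewrite big_ord0; have := gM (fun _ => point); rewrite big_ord0.
rewrite big_ord_recl; set T' := (\sum_(i < n) _)%E.
have headM y : ((g ord0 y)%:E + T' <= M)%E.
  rewrite -leeBrDl // {}/T'; apply: IH => f; rewrite leeBrDl // -EFinD.
  have := gM (fun i => if unlift ord0 i is Some j then f j else y).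
  by rewrite big_ord_recl /= unlift_none; under eq_bigr do rewrite liftK.
case: T' headM => [t| |] headM; last by rewrite addeNy leNye.
- rewrite -leeBrDr //; apply/ereal_supP => _ [y _ <-].
  by rewrite leeBrDr // headM.
- have := headM point; rewrite [in X in X -> _]addey // leye_eq => /eqP ->.
  exact: leey.
Qed.

Lemma fconj_Hfun n (u : R -> R) (lam : R) (th : 'cV[R]_n) : (0 < n)%N ->
  fconj (fun z : 'cV[R]_n => (Hfun u z)%:E) ((- lam) *: th) = (- Dobj u lam th)%E.
Proof.
move=> n_gt0; have n0 : n%:R != 0 :> R by rewrite pnatr_eq0 -lt0n.
have ninv_gt0 : 0 < (n%:R : R)^-1 by rewrite invr_gt0 ltr0n.
pose g (i : 'I_n) y := u y - n%:R * lam * th i ord0 * y.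
have separate (x : 'cV[R]_n) :
    \sum_(i < n) ((- lam) *: th) i ord0 * x i ord0 - Hfun u x
    = (n%:R)^-1 * \sum_(i < n) g i (x i ord0).
  rewrite /Hfun /g mulNr opprK sumrB mulrBr addrC; congr (_ + _).
  by rewrite mulr_sumr -sumrN; apply: eq_bigr => i _; rewrite mxE; field.
rewrite /Dobj -muleN -?sumeN => [|i j _ _]; last first.
  by rewrite /adde_def !(lt_eqF (uconj_lty _ _)) andbF.
under eq_bigr do rewrite oppe_uconj.
apply/eqP; rewrite eq_le; apply/andP; split.
  apply/ereal_supP => _ [x _ <-]; rewrite -EFinB separate EFinM lee_pmul2l //.
  rewrite -sumEFin; apply: lee_sum => i _; apply: ereal_sup_ubound.
  by exists (x i ord0).
rewrite -lee_pdivlMl ?ltr0n // invrK; apply: (sum_ereal_sup_le (g := g)) => f.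
rewrite -lee_pdivrMl ?ltr0n // -EFinM.
apply: le_ereal_sup_tmp; eexists; first by exists (\col_j f j).
by rewrite -EFinB separate; under [X in (_ <= (_ * X)%:E)%E]eq_bigr do rewrite mxE.
Qed.

Lemma fconj_fpen_le0 d (lam : R) (v : 'cV[R]_d) :
  [forall k, v k ord0 <= lam] -> fconj (fpen lam) v = 0%E.
Proof.
move=> /forallP v_le; apply/eqP; rewrite eq_le; apply/andP; split.
  apply/ereal_supP => _ [x _ <-]; rewrite /fpen.
  case: ifP => [/forallP x_ge0|_]; last by rewrite leNye.
  rewrite -EFinB lee_fin mulr_sumr -sumrB; apply: sumr_le0 => i _.
  by rewrite ger0_norm // subr_le0 ler_wpM2r.
apply: le_ereal_sup_tmp; exists 0%E => //; exists 0 => //.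
rewrite /fpen ifT; last by apply/forallP => k; rewrite mxE.
by rewrite !big1 => [|i _|i _]; rewrite ?mxE ?normr0 ?mulr0 // -EFinB subrr.
Qed.

Lemma fconj_fpen_pinfty d (lam : R) (v : 'cV[R]_d) k :
  lam < v k ord0 -> fconj (fpen lam) v = +oo%E.
Proof.
move=> lam_lt; apply: eq_infty => M.
pose t := Num.max M 0 / (v k ord0 - lam).
have t_ge0 : 0 <= t by rewrite divr_ge0 ?le_max ?lexx ?orbT // subr_ge0 ltW.
pose x : 'cV[R]_d := t *: delta_mx k ord0.
have xE i : x i ord0 = t * (delta_mx k ord0 : 'cV[R]_d) i ord0 by rewrite mxE.
have x_ge0 i : 0 <= x i ord0 by rewrite xE mulr_ge0 // mxE ler0n.
apply: le_ereal_sup_tmp; eexists; first by exists x.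
rewrite /fpen ifT; last exact/forallP.
rewrite -EFinB lee_fin; under eq_bigr do rewrite xE mulrA mulrC.
under [X in _ - _ * X]eq_bigr do rewrite ger0_norm // xE mulrC.
rewrite !sum_delta_mx_mul.
have -> : v k ord0 * t - lam * t = Num.max M 0.
  by rewrite -mulrBl mulrC divfK // subr_eq0 gt_eqF.
by rewrite le_max lexx.
Qed.

Lemma FRdual_E n d (u : R -> R) (lam : R) (X : 'M[R]_(n, d)) (th : 'cV[R]_n) :
  (0 < n)%N -> 0 < lam ->
  FRdual u lam X th =
    (if (norminf (map_mx phi (X^T *m th)) <= 1)%R then Dobj u lam th else -oo)%E.
Proof.
move=> n_gt0 lam_gt0; rewrite /FRdual fconj_Hfun // oppeK norminf_phi_le1.
have scaled_le k : ((lam *: (X^T *m th)) k ord0 <= lam) = ((X^T *m th) k ord0 <= 1).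
  by rewrite mxE -{2}(mulr1 lam) ler_pM2l.
case: ifP => [/forallP corr_le1 | /negbT].
  rewrite fconj_fpen_le0 ?oppe0 ?add0e //.
  by apply/forallP => k; rewrite scaled_le.
rewrite negb_forall => /existsP[k]; rewrite -ltNge => corr_gt1.
by rewrite (@fconj_fpen_pinfty _ _ _ k) // ltNge scaled_le -ltNge.
Qed.

End FenchelDual.

Section Gradient.
Variable R : realType.

Lemma diff_coord m n (M : 'M[R]_(m, n)) i j :
  'd (fun N : 'M[R]_(m, n) => N i j) M = (fun N => N i j) :> (_ -> R).
Proof.
have @f : {linear 'M[R]_(m, n) -> R}.
  by exists (fun N : 'M[R]_(_, _) => N i j); do 2![eexists]; do ?[constructor];
     rewrite ?mxE// => ? *; rewrite ?mxE//; move=> ?; rewrite !mxE.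
by rewrite (_ : (fun _ => _) = f) // diff_lin //; exact: coord_continuous.
Qed.

Lemma diff_sum (V W : normedModType R) n (f : 'I_n -> V -> W) x :
  (forall i, differentiable (f i) x) ->
  'd (\sum_(i < n) f i) x = \sum_(i < n) ('d (f i) x : V -> W) :> (V -> W).
Proof.
elim: n f => [|n IH] f df; first by rewrite !big_ord0 diff_cst.
rewrite !big_ord_recr /= diffD; [|exact: differentiable_sum|exact: df].
by rewrite IH.
Qed.

Lemma diff_Hfun n (u : R -> R) (z v : 'cV[R]_n) : (forall x, derivable u x 1) ->
  'd (Hfun u) z v = - (n%:R)^-1 * \sum_(i < n) v i ord0 * 'D_1 u (z i ord0).
Proof.
move=> du; pose ui i := u \o (fun N : 'cV[R]_n => N i ord0).
have dui i : differentiable (ui i) z.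
  by apply: differentiable_comp; [exact: differentiable_coord|exact/derivable1_diffP].
have -> : Hfun u = (- (n%:R)^-1) *: \sum_(i < n) ui i.
  by apply/funext => y; rewrite /Hfun /= fct_sumE.
rewrite diffZ /=; last exact: differentiable_sum.
rewrite diff_sum // fct_sumE; congr (_ * _); apply: eq_bigr => i _.
rewrite diff_comp /=; [|exact: differentiable_coord|exact/derivable1_diffP].
rewrite diff_coord deriveE; last exact/derivable1_diffP.
by rewrite -[in LHS](mulr1 (v i ord0)) -[v i ord0 * 1]/(v i ord0 *: 1) linearZ.
Qed.

End Gradient.

Section Optimality.
Variables (R : realType) (n d : nat) (X : 'M[R]_(n, d)) (u : R -> R) (lam : R).

Hypotheses (n_gt0 : (0 < n)%N).

Definition score (w : 'cV[R]_d) (j : 'I_n) : R := \sum_(k < d) w k ord0 * X j k.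
Definition mean_utility (w : 'cV[R]_d) : R := (n%:R)^-1 * \sum_(j < n) u (score w j).
Definition corr (th : 'cV[R]_n) (k : 'I_d) : R := (X^T *m th) k ord0.

Lemma PobjE w :
  Pobj u lam X w = (- mean_utility w + lam * \sum_(k < d) `|w k ord0|)%:E.
Proof. by rewrite /Pobj mulNr. Qed.

Lemma scoreD w v t j : score (w + t *: v) j = t * score v j + score w j.
Proof.
by rewrite /score mulr_sumr -big_split /=; apply: eq_bigr => k _; rewrite !mxE; ring.
Qed.

Lemma mulmx_score (w : 'cV[R]_d) j : (X *m w) j ord0 = score w j.
Proof. by rewrite mxE; apply: eq_bigr => k _; rewrite mulrC. Qed.

Lemma trmx_col_mulmx (th : 'cV[R]_n) k : ((col k X)^T *m th) ord0 ord0 = corr th k.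
Proof. by rewrite /corr !mxE; apply: eq_bigr => j _; rewrite !mxE. Qed.

Lemma trmx_mulmx_col (th : 'cV[R]_n) k : (th^T *m col k X) ord0 ord0 = corr th k.
Proof. by rewrite /corr !mxE; apply: eq_bigr => j _; rewrite !mxE mulrC. Qed.

Lemma corr_CD th k : CD u lam X th -> corr th k <= 1.
Proof. by case=> _ /=; rewrite norminf_phi_le1 => /forallP; apply. Qed.

Lemma duality_gap (w : 'cV[R]_d) (th : 'cV[R]_n) (a : 'I_n -> R) :
  (forall k, 0 <= w k ord0) ->
  - mean_utility w + lam * \sum_(k < d) `|w k ord0| - (n%:R)^-1 * \sum_(j < n) a j =
  (n%:R)^-1 * \sum_(j < n) (n%:R * lam * th j ord0 * score w j - u (score w j) - a j)
  + lam * \sum_(k < d) w k ord0 * (1 - corr th k).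
Proof.
move=> w_ge0.
have cross : \sum_(j < n) th j ord0 * score w j = \sum_(k < d) w k ord0 * corr th k.
  rewrite /score /corr; under eq_bigr do rewrite mulr_sumr.
  rewrite exchange_big /=; apply: eq_bigr => k _; rewrite mxE mulr_sumr.
  by apply: eq_bigr => j _; rewrite mxE; ring.
have slack : \sum_(k < d) w k ord0 * (1 - corr th k) =
             \sum_(k < d) `|w k ord0| - \sum_(k < d) w k ord0 * corr th k.
  by rewrite -sumrB; apply: eq_bigr => k _; rewrite ger0_norm // mulrBr mulr1.
have scaled : \sum_(j < n) n%:R * lam * th j ord0 * score w j =
              n%:R * lam * \sum_(j < n) th j ord0 * score w j.
  by rewrite mulr_sumr; apply: eq_bigr => j _; rewrite mulrA.
rewrite /mean_utility !sumrB slack -cross scaled; field.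
by rewrite pnatr_eq0 -lt0n.
Qed.

Lemma domD_uconj_fin_num (th : 'cV[R]_n) j :
  domD u lam th -> uconj u (n%:R * lam * th j ord0) \is a fin_num.
Proof.
rewrite /domD /= fin_numE (lt_eqF (uconj_lty _ _)) andbT => Dth.
apply/negP => /eqP uconjNy; move: Dth; rewrite /Dobj.
have -> : (\sum_(i < n) uconj u (n%:R * lam * th i ord0))%E = -oo%E.
  by apply/esum_eqNyP; exists j; rewrite mem_index_enum.
by rewrite mulrNy gtr0_sg ?invr_gt0 ?ltr0n // mul1e.
Qed.

Hypotheses (lam_gt0 : 0 < lam) (u_concave : concave_fun u)
  (u_derivable : forall x, derivable u x 1).

Lemma is_derive_mean_utility_ray (w v : 'cV[R]_d) :
  is_derive (0 : R) 1 (fun t => mean_utility (w + t *: v))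
    ((n%:R)^-1 * \sum_(j < n) score v j * 'D_1 u (score w j)).
Proof.
have -> : (fun t => mean_utility (w + t *: v)) =
    (n%:R)^-1 \*: \sum_(j < n) (fun t => u (t * score v j + score w j)).
  apply/funext => t; rewrite /mean_utility /= fct_sumE.
  by under eq_bigr do rewrite scoreD.
by apply: is_deriveZ; apply: is_derive_sum => j; exact: is_derive0_comp_affine.
Qed.

Section PrimalOptimum.
Variable ws : 'cV[R]_d.
Hypotheses (ws_CP : CP u lam X ws)
  (ws_min : forall w, CP u lam X w -> (Pobj u lam X ws <= Pobj u lam X w)%E).

Let ws_ge0 k : 0 <= ws k ord0 := ws_CP.2 k.

Lemma mean_utility_ray_le v t : (forall k, 0 <= (ws + t *: v) k ord0) ->
  mean_utility (ws + t *: v) <= mean_utility ws + lam * (\sum_(k < d) v k ord0) * t.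
Proof.
move=> ray_ge0; have /ws_min : CP u lam X (ws + t *: v).
  by split=> //; rewrite /domP /= PobjE; exact: ltry.
rewrite !PobjE lee_fin.
have -> : \sum_(k < d) `|(ws + t *: v) k ord0| =
          \sum_(k < d) `|ws k ord0| + t * \sum_(k < d) v k ord0.
  rewrite mulr_sumr -big_split; apply: eq_bigr => k _.
  by rewrite ger0_norm // ger0_norm // !mxE.
by rewrite mulrDr [t * _]mulrC mulrA; lra.
Qed.

Lemma primal_foc_ray_right v :
  (forall t, 0 < t < 1 -> forall k, 0 <= (ws + t *: v) k ord0) ->
  (n%:R)^-1 * \sum_(j < n) score v j * 'D_1 u (score ws j) <= lam * \sum_(k < d) v k ord0.
Proof.
move=> ray_ge0; have [dmu <-] := is_derive_mean_utility_ray ws v.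
apply: (derive1_le_of_majorant_right ltr01 dmu) => t /ray_ge0 /mean_utility_ray_le.
by rewrite /= scale0r addr0 subr0.
Qed.

Lemma primal_foc_ray_left v :
  (forall t, -1 < t < 0 -> forall k, 0 <= (ws + t *: v) k ord0) ->
  lam * \sum_(k < d) v k ord0 <= (n%:R)^-1 * \sum_(j < n) score v j * 'D_1 u (score ws j).
Proof.
move=> ray_ge0; have [dmu <-] := is_derive_mean_utility_ray ws v.
apply: (derive1_ge_of_majorant_left (ltrN10 _) dmu) => t /ray_ge0 /mean_utility_ray_le.
by rewrite /= scale0r addr0 subr0.
Qed.

Lemma primal_foc_coord k : (n%:R)^-1 * \sum_(j < n) X j k * 'D_1 u (score ws j) <= lam.
Proof.
pose e : 'cV[R]_d := delta_mx k ord0.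
have score_e j : score e j = X j k by rewrite /score sum_delta_mx_mul.
have sum_e : \sum_(i < d) e i ord0 = 1.
  by rewrite -[RHS](sum_delta_mx_mul k (fun=> 1)); under [RHS]eq_bigr do rewrite mulr1.
have := primal_foc_ray_right (v := e) _; rewrite sum_e mulr1.
under eq_bigr do rewrite score_e.
by apply=> t /andP[t_gt0 _] i; rewrite !mxE addr_ge0 // mulr_ge0 ?ler0n // ltW.
Qed.

Lemma primal_foc_scale :
  (n%:R)^-1 * \sum_(j < n) score ws j * 'D_1 u (score ws j) = lam * \sum_(k < d) ws k ord0.
Proof.
apply/eqP; rewrite eq_le primal_foc_ray_right ?primal_foc_ray_left //;
  by move=> t /andP[t_gt t_lt] k; rewrite !mxE; have := ws_ge0 k; nra.
Qed.

Definition dual_of_primal : 'cV[R]_n :=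
  \col_j ('D_1 u (score ws j) / (n%:R * lam)).

Lemma dual_of_primalE j : n%:R * lam * dual_of_primal j ord0 = 'D_1 u (score ws j).
Proof. by rewrite mxE mulrC divfK // mulf_neq0 ?gt_eqF // ltr0n. Qed.

Lemma Dobj_dual_of_primal : Dobj u lam dual_of_primal = Pobj u lam X ws.
Proof.
rewrite /Dobj; under eq_bigr do rewrite dual_of_primalE uconj_derive //.
rewrite sumEFin -EFinM PobjE /mean_utility sumrB mulrBr.
rewrite (eq_bigr (fun j => score ws j * 'D_1 u (score ws j))) => [|j _]; last exact: mulrC.
have -> : \sum_(k < d) `|ws k ord0| = \sum_(k < d) ws k ord0.
  by apply: eq_bigr => k _; exact: ger0_norm.
by rewrite primal_foc_scale addrC.
Qed.

Lemma dual_of_primal_CD : CD u lam X dual_of_primal.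
Proof.
split; first by rewrite /domD /= Dobj_dual_of_primal PobjE; exact: ltNyr.
rewrite /= norminf_phi_le1; apply/forallP => k; rewrite mxE.
under eq_bigr do rewrite !mxE mulrA.
rewrite -mulr_suml ler_pdivrMr ?mul1r ?mulr_gt0 ?ltr0n //.
by have := primal_foc_coord k; rewrite ler_pdivrMl ?ltr0n.
Qed.

Section DualOptimum.
Variable ths : 'cV[R]_n.
Hypotheses (ths_CD : CD u lam X ths)
  (ths_max : forall th, CD u lam X th -> (Dobj u lam th <= Dobj u lam ths)%E).

Let a j := fine (uconj u (n%:R * lam * ths j ord0)).

Let uconj_thsE j : uconj u (n%:R * lam * ths j ord0) = (a j)%:E.
Proof. by rewrite fineK // (domD_uconj_fin_num j ths_CD.1). Qed.

Lemma optimal_fenchel_young_slackness :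
  (forall j, uconj u (n%:R * lam * ths j ord0) =
             (n%:R * lam * ths j ord0 * score ws j - u (score ws j))%:E) /\
  (forall k, ws k ord0 * (1 - corr ths k) = 0).
Proof.
have gap_le0 : - mean_utility ws + lam * \sum_(k < d) `|ws k ord0|
               - (n%:R)^-1 * \sum_(j < n) a j <= 0.
  rewrite subr_le0 -lee_fin -PobjE -Dobj_dual_of_primal.
  have -> : ((n%:R)^-1 * \sum_(j < n) a j)%:E = Dobj u lam ths.
    by rewrite /Dobj; under [in RHS]eq_bigr do rewrite uconj_thsE; rewrite sumEFin.
  exact: ths_max dual_of_primal_CD.
rewrite (duality_gap ths _ ws_ge0) in gap_le0.
have gap_ge0 j : 0 <= n%:R * lam * ths j ord0 * score ws j - u (score ws j) - a j.
  by rewrite subr_ge0 -lee_fin -uconj_thsE uconj_le.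
have slack_ge0 k : 0 <= ws k ord0 * (1 - corr ths k).
  by rewrite mulr_ge0 // subr_ge0 corr_CD.
set G := \sum_(j < n) _ in gap_le0; set S := \sum_(k < d) _ in gap_le0.
have G_ge0 : 0 <= G by apply: sumr_ge0 => j _; exact: gap_ge0.
have S_ge0 : 0 <= S by apply: sumr_ge0 => k _; exact: slack_ge0.
have ninv_gt0 : 0 < (n%:R : R)^-1 by rewrite invr_gt0 ltr0n.
have nG_ge0 := mulr_ge0 (ltW ninv_gt0) G_ge0.
have lamS_ge0 := mulr_ge0 (ltW lam_gt0) S_ge0.
have G0 : G = 0 by apply: (mulfI (lt0r_neq0 ninv_gt0)); rewrite mulr0; lra.
have S0 : S = 0 by apply: (mulfI (lt0r_neq0 lam_gt0)); rewrite mulr0; lra.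
split=> [j|k]; last exact: (psumr_eq0P (fun k _ => slack_ge0 k) S0).
rewrite uconj_thsE; congr EFin.
by have := psumr_eq0P (fun j _ => gap_ge0 j) G0 (i := j) isT; lra.
Qed.

Lemma optimal_derive j : 'D_1 u (score ws j) = n%:R * lam * ths j ord0.
Proof.
exact: derive1_of_uconj_attained (optimal_fenchel_young_slackness.1 j).
Qed.

Lemma optimal_slackness k : ws k ord0 <> 0 -> corr ths k = 1.
Proof.
move=> ws_neq0; have /eqP := optimal_fenchel_young_slackness.2 k.
by rewrite mulf_eq0 subr_eq0 => /orP[/eqP//|/eqP<-].
Qed.

End DualOptimum.

End PrimalOptimum.

End Optimality.

Theorem theorem3 (R : realType) (n d : nat) (X : 'M[R]_(n, d)) (u : R -> R) (lam : R) :
  (0 < n)%N ->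
  utility u ->
  (forall x : R, derivable u x 1) ->
  convex_fun (hfun u X) ->
  (forall w : 'cV[R]_d, differentiable (hfun u X) w) ->
  (exists L : R, forall (w v x : 'cV[R]_d),
      `|'d (hfun u X) w x - 'd (hfun u X) v x| <= L * `|w - v| * `|x|) ->
  0 < lam ->
  (* the Fenchel--Rockafellar dual of the primal is D_lambda on C_D *)
  (forall th : 'cV[R]_n,
      FRdual u lam X th =
      (if (norminf (map_mx phi (X^T *m th)) <= 1)%R then Dobj u lam th else -oo)%E) /\
  (* optimality conditions for an optimal primal-dual pair *)
  (forall (ws : 'cV[R]_d) (ths : 'cV[R]_n),
      CP u lam X ws ->
      (forall w, CP u lam X w -> (Pobj u lam X ws <= Pobj u lam X w)%E) ->
      CD u lam X ths ->
      (forall th, CD u lam X th -> (Dobj u lam th <= Dobj u lam ths)%E) ->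
      (forall v : 'cV[R]_n,
          'd (Hfun u) (X *m ws) v = \sum_(i < n) (- lam * ths i ord0) * v i ord0) /\
      (forall j : 'I_d,
          (ws j ord0 = 0 -> phi (((col j X)^T *m ths) ord0 ord0) <= 1) /\
          (ws j ord0 <> 0 ->
             phi (((col j X)^T *m ths) ord0 ord0) = 1 /\
             ((ths^T *m col j X) ord0 ord0) * ws j ord0 = `|ws j ord0|))).
Proof.
move=> n_gt0 [_ u_concave] u_derivable _ _ _ lam_gt0.
split=> [th|ws ths ws_CP ws_min ths_CD ths_max]; first exact: FRdual_E.
have D_opt := optimal_derive n_gt0 lam_gt0 u_concave u_derivable ws_CP ws_min ths_CD ths_max.
have slack := optimal_slackness n_gt0 lam_gt0 u_concave u_derivable ws_CP ws_min ths_CD ths_max.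
split=> [v|j].
  rewrite diff_Hfun // mulr_sumr; apply: eq_bigr => i _.
  by rewrite mulmx_score D_opt; field; rewrite pnatr_eq0 -lt0n.
rewrite trmx_col_mulmx trmx_mulmx_col phi_le1; split=> [_|ws_neq0]; first exact: corr_CD ths_CD.
rewrite slack // mul1r ger0_norm; last by case: ws_CP => _; apply.
by rewrite /phi max_l ?ler01.
Qed.
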